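(* Let $M$ be a parabolic-retract-compatible Coxeter matrix over a finite set $S$ and $A_S$ its associated Artin group. Then for every $x\in S$ there exists an ordinary retraction $\varphi_x:A_S\to A_{S\setminus\{x\}}$.
   Context: A Coxeter matrix over a finite set $S$ is a matrix $M=(m_{s,t})_{s,t\in S}$ with entries in $\mathbb{N}\cup\{\infty\}$, $m_{s,s}=1$, and $m_{s,t}=m_{t,s}\ge 2$ for $s\neq t$. Write $\Pi(s,t,m)$ for the alternating word $sts\cdots$ of length $m$. The Artin group is $A_S=\langle S\mid \Pi(s,t,m_{s,t})=\Pi(t,s,m_{s,t})$ for $s\neq t$, $m_{s,t}\neq\infty\rangle$. For $X\subseteq S$, $A_X$ is the subgroup generated by $X$ ($A_\emptyset$ trivial) and $M_X$ the submatrix indexed by $X$. $M$ is retract-compatible if all its entries are finite odd numbers and for every triple $a,b,c\in S$ of pairwise distinct elements, up to permuting $a,b,c$, $m_{a,b}=m_{a,c}$ and $m_{b,c}$ divides $m_{a,b}$; a rank-$1$ Coxeter matrix is always retract-compatible. $M$ is parabolic-retract-compatible if there is a partition $S=T_1\sqcup\cdots\sqcup T_k$ such that (1) each $M_{T_i}$ is retract-compatible, and (2) for each $i\neq j$ there exists $n_{ij}$, either an even number or $\infty$, with $m_{a,b}=n_{ij}$ for all $(a,b)\in T_i\times T_j$. A retraction $\varphi:A_S\to A_X$ (homomorphism restricting to the identity on $A_X$) is ordinary if $\varphi(x)=x$ for all $x\in X$ and $\varphi(y)\in X\cup\{1\}$ for all $y\in S\setminus X$. *)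

(* Artin groups are given by a presentation; we model them
   as words in letters (s, b) (b = true means s^-1) modulo the congruence
   generated by free cancellation and the Artin relations. *)
From mathcomp Require Import all_boot.
Set Implicit Arguments. Unset Strict Implicit. Unset Printing Implicit Defensive.

Section Artin.
Variable S : finType.

(* Coxeter matrix: entries in N ∪ {∞}; None stands for ∞. *)
Definition coxeter_matrix (M : S -> S -> option nat) : Prop :=
  (forall s, M s s = Some 1) /\
  (forall s t, M s t = M t s) /\
  (forall s t, s != t -> forall k, M s t = Some k -> 2 <= k).

Definition letter := (S * bool)%type.
Definition word := seq letter.
Definition inv_letter (a : letter) : letter := (a.1, ~~ a.2).

Definition Pi (s t : S) (m : nat) : word :=
  mkseq (fun i => (if odd i then t else s, false)) m.

Inductive artin_eq (M : S -> S -> option nat) : word -> word -> Prop :=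
| ae_refl u : artin_eq M u u
| ae_sym u v : artin_eq M u v -> artin_eq M v u
| ae_trans u v w : artin_eq M u v -> artin_eq M v w -> artin_eq M u w
| ae_cat u u' v v' : artin_eq M u u' -> artin_eq M v v' ->
    artin_eq M (u ++ v) (u' ++ v')
| ae_free (a : letter) : artin_eq M [:: a; inv_letter a] [::]
| ae_rel (s t : S) (k : nat) : s != t -> M s t = Some k ->
    artin_eq M (Pi s t k) (Pi t s k).

Definition word_over (X : {set S}) (w : word) : bool :=
  all (fun a : letter => a.1 \in X) w.

Definition ordinary_retraction (M : S -> S -> option nat) (X : {set S})
    (phi : word -> word) : Prop :=
  (forall u v, artin_eq M u v -> artin_eq M (phi u) (phi v)) /\
  (forall u v, artin_eq M (phi (u ++ v)) (phi u ++ phi v)) /\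
  (forall u, exists2 w, word_over X w & artin_eq M (phi u) w) /\
  (forall w, word_over X w -> artin_eq M (phi w) w) /\
  (forall x, x \in X -> artin_eq M (phi [:: (x, false)]) [:: (x, false)]) /\
  (forall y, y \notin X ->
     artin_eq M (phi [:: (y, false)]) [::] \/
     exists2 x, x \in X & artin_eq M (phi [:: (y, false)]) [:: (x, false)]).

Definition retract_compatible (M : S -> S -> option nat) (T : {set S}) : Prop :=
  (forall a b, a \in T -> b \in T -> exists2 k, M a b = Some k & odd k) /\
  (forall a b c, a \in T -> b \in T -> c \in T ->
     a != b -> a != c -> b != c ->
     exists a' b' c', [set a'; b'; c'] = [set a; b; c] /\
       M a' b' = M a' c' /\
       exists p q, [/\ M b' c' = Some p, M a' b' = Some q & p %| q]).

Definition parabolic_retract_compatible (M : S -> S -> option nat) : Prop :=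
  exists P : {set {set S}},
    partition P [set: S] /\
    (forall T, T \in P -> retract_compatible M T) /\
    (forall T T', T \in P -> T' \in P -> T != T' ->
       exists n : option nat,
         (n = None \/ exists2 k, n = Some k & ~~ odd k) /\
         (forall a b, a \in T -> b \in T' -> M a b = n)).

End Artin.

From mathcomp Require Import all_boot.
Set Implicit Arguments. Unset Strict Implicit. Unset Printing Implicit Defensive.

(* A generator substitution s |-> f s (f s in S or 1) defines an endomorphism
   of A_S as soon as it maps both sides of every Artin relation to equal
   elements; fixing every generator other than x, it suffices to check the
   relations through x.  Let T be the block of x.  If T = {x}, every label
   m_{x,t} is even or infinite, so killing x sends both sides of a relation
   of length 2n to t^n.  Otherwise send x to z in T with m_{x,z} minimal.
   For t outside T, m_{x,t} = m_{z,t} by condition (2).  For t in T,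
   retract-compatibility of {x, z, t} and minimality of m_{x,z} give
   m_{z,t} | m_{x,t}; as m_{z,t} is odd, the alternating word of length
   m_{x,t} in z, t is a product of copies of the (z, t) relation. *)

Section AlternatingWords.
Variable S : finType.

Lemma Pi_cons (s t : S) k : Pi s t k.+1 = (s, false) :: Pi t s k.
Proof.
rewrite /Pi /mkseq -add1n iotaD map_cat -[in iota 1 k](addn0 1) iotaDl -map_comp.
by congr (_ :: _); apply: eq_map => i /=; case: (odd i).
Qed.

Lemma Pi_addn (s t : S) a b :
  Pi s t (a + b) = Pi s t a ++ (if odd a then Pi t s b else Pi s t b).
Proof.
elim: a s t => [|a IH] s t //.
by rewrite addSn !Pi_cons IH /=; case: (odd a).
Qed.

Lemma all_Pi (P : pred (letter S)) s t k :
  P (s, false) -> P (t, false) -> all P (Pi s t k).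
Proof. by elim: k s t => [|k IH] s t Ps Pt //; rewrite Pi_cons /= Ps IH. Qed.

Lemma Pi_rel_mul (M : S -> S -> option nat) s t r j :
  s != t -> M s t = Some r -> odd r ->
  artin_eq M (Pi s t (r * j)) (Pi t s (r * j)).
Proof.
move=> st Mst odd_r; elim: j => [|j IH]; first by rewrite muln0; apply: ae_refl.
by rewrite mulnS !Pi_addn odd_r; apply: ae_cat; [apply: ae_rel | apply: ae_sym].
Qed.

End AlternatingWords.

Section Substitution.
Variables (S : finType) (M : S -> S -> option nat) (f : S -> option S).

Definition word_subst (w : word S) : word S :=
  flatten [seq if f a.1 is Some s then [:: (s, a.2)] else [::] | a <- w].

Lemma word_subst_cat u v : word_subst (u ++ v) = word_subst u ++ word_subst v.
Proof. by rewrite /word_subst map_cat flatten_cat. Qed.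

Lemma word_subst_artin_eq :
  (forall s t k, s != t -> M s t = Some k ->
     artin_eq M (word_subst (Pi s t k)) (word_subst (Pi t s k))) ->
  forall u v, artin_eq M u v -> artin_eq M (word_subst u) (word_subst v).
Proof.
move=> subst_rel u v; elim=> {u v} [u|u v _ IH|u v w _ IH1 _ IH2|u u' v v' _ IH1 _ IH2|a|s t k].
- exact: ae_refl.
- exact: ae_sym.
- exact: ae_trans IH1 IH2.
- by rewrite !word_subst_cat; apply: ae_cat.
- case: a => s b; rewrite /word_subst /inv_letter /=.
  by case: (f s) => [s'|] /=; [apply: (ae_free M (s', b)) | apply: ae_refl].
- exact: subst_rel.
Qed.

Lemma word_subst_Pi s t s' t' k : f s = Some s' -> f t = Some t' ->
  word_subst (Pi s t k) = Pi s' t' k.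
Proof.
move=> fs ft; elim: k s t s' t' fs ft => [|k IH] s t s' t' fs ft //.
by rewrite !Pi_cons /word_subst /= fs /=; congr (_ :: _); apply: IH.
Qed.

Lemma word_subst_Pi_double x t n : f x = None ->
  word_subst (Pi x t n.*2) = word_subst (Pi t x n.*2).
Proof.
move=> fx; rewrite /word_subst; elim: n => [|n IH] //.
by rewrite doubleS !Pi_cons /= fx /= IH.
Qed.

Variable x : S.
Hypothesis f_fix : forall s, s != x -> f s = Some s.
Hypothesis f_moves : f x != Some x.

Lemma word_subst_id w : word_over [set~ x] w -> word_subst w = w.
Proof.
rewrite /word_subst; elim: w => [|[s b] w IH] //= /andP[+ /IH ->].
by rewrite in_setC1 => /f_fix ->.
Qed.

Lemma word_over_word_subst w : word_over [set~ x] (word_subst w).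
Proof.
have f_avoid s y : f s = Some y -> y \in [set~ x].
  rewrite in_setC1; case: (eqVneq s x) => [-> fx|/f_fix -> [<-] //].
  by apply: contraNneq f_moves => yx; rewrite fx yx.
rewrite /word_over /word_subst; elim: w => [|[s b] w IH] //=.
by rewrite all_cat IH andbT; case fs: (f s) => [y|] //=; rewrite (f_avoid s).
Qed.

Lemma word_subst_Pi_rel :
  (forall s t, M s t = M t s) ->
  (forall t k, t != x -> M x t = Some k ->
     artin_eq M (word_subst (Pi x t k)) (word_subst (Pi t x k))) ->
  forall s t k, s != t -> M s t = Some k ->
     artin_eq M (word_subst (Pi s t k)) (word_subst (Pi t s k)).
Proof.
move=> Msym subst_rel_x s t k.
have [-> | sx] := eqVneq s x; first by rewrite eq_sym; apply: subst_rel_x.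
have [-> _ Msx | tx st Mst] := eqVneq t x; first by apply/ae_sym/subst_rel_x; rewrite // -Msym.
have Pi_over u v : u != x -> v != x -> word_over [set~ x] (Pi u v k).
  by move=> ux vx; apply: all_Pi; rewrite /= in_setC1.
by rewrite !word_subst_id ?Pi_over //; apply: ae_rel.
Qed.

Lemma word_subst_ordinary_retraction :
  (forall s t, M s t = M t s) ->
  (forall t k, t != x -> M x t = Some k ->
     artin_eq M (word_subst (Pi x t k)) (word_subst (Pi t x k))) ->
  ordinary_retraction M [set~ x] word_subst.
Proof.
move=> Msym subst_rel_x.
have over1 y : y != x -> word_over [set~ x] [:: (y, false)].
  by rewrite /word_over /= in_setC1 => ->.
split; first exact/word_subst_artin_eq/word_subst_Pi_rel.
split; first by move=> u v; rewrite word_subst_cat; apply: ae_refl.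
split; first by move=> u; exists (word_subst u); [apply: word_over_word_subst | apply: ae_refl].
split; first by move=> w /word_subst_id ->; apply: ae_refl.
split; first by move=> y; rewrite in_setC1 => /over1/word_subst_id ->; apply: ae_refl.
move=> y; rewrite in_setC1 negbK => /eqP ->.
have := word_over_word_subst [:: (x, false)]; rewrite /word_subst /=.
case: (f x) => [z|] /=; last by left; apply: ae_refl.
by rewrite /word_over /= andbT => zx; right; exists z => //; apply: ae_refl.
Qed.

End Substitution.

Lemma set3_sym_transfer (T : finType) (Q : T -> T -> T -> Prop) a b c x y z :
  (forall a b c, Q a b c -> Q b a c) -> (forall a b c, Q a b c -> Q a c b) ->
  x != y -> x != z -> y != z -> [set a; b; c] = [set x; y; z] ->
  Q a b c -> Q x y z.
Proof.
move=> Q12 Q23 xy xz yz eq_abc Qabc.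
have Qperm : [/\ Q a c b, Q b a c, Q b c a, Q c a b & Q c b a].
  have Qacb := Q23 _ _ _ Qabc; have Qbac := Q12 _ _ _ Qabc.
  have Qcab := Q12 _ _ _ Qacb; by split; [| | apply: Q23 | | apply: Q23].
have mem u : u \in [set x; y; z] -> [\/ u = a, u = b | u = c].
  by rewrite -eq_abc !inE -orbA => /or3P[] /eqP ->; [apply: Or31 | apply: Or32 | apply: Or33].
have := mem x; have := mem y; have := mem z; rewrite !inE !eqxx !orbT.
by do 3!move=> /(_ isT) [] ?; subst; case: Qperm => *; rewrite ?eqxx in xy xz yz.
Qed.

(* The retract-compatibility condition on a triangle whose edges opposite to
   its vertices are labelled [u], [v], [w]: one label divides the other two,
   which are equal. *)
Definition rc_labels (u v w : nat) : bool :=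
  [|| (v == w) && (u %| v), (u == w) && (v %| u) | (u == v) && (w %| u)].

Lemma rc_labels_swap12 u v w : rc_labels u v w -> rc_labels v u w.
Proof.
by rewrite /rc_labels => /or3P[] /andP[/eqP-> h]; rewrite eqxx h ?orbT.
Qed.

Lemma rc_labels_swap23 u v w : rc_labels u v w -> rc_labels u w v.
Proof.
by rewrite /rc_labels => /or3P[] /andP[/eqP-> h]; rewrite eqxx h ?orbT.
Qed.

Lemma rc_labels_dvd u v w : 0 < w -> w <= v -> rc_labels u v w -> u %| v.
Proof.
move=> w_gt0 le_wv; rewrite /rc_labels => /or3P[] /andP[/eqP-> //].
by move=> dvd_vw; rewrite (@anti_leq v w) // le_wv dvdn_leq.
Qed.

Section RetractCompatibleTriangles.
Variables (S : finType) (M : S -> S -> option nat).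
Hypothesis Msym : forall s t, M s t = M t s.

Definition rc_triangle (a b c : S) : Prop :=
  exists u v w, [/\ M b c = Some u, M a c = Some v, M a b = Some w & rc_labels u v w].

Lemma rc_triangle_swap12 a b c : rc_triangle a b c -> rc_triangle b a c.
Proof.
case=> u [v [w [Mbc Mac Mab uvw]]].
by exists v, u, w; rewrite (Msym b a); split=> //; apply: rc_labels_swap12.
Qed.

Lemma rc_triangle_swap23 a b c : rc_triangle a b c -> rc_triangle a c b.
Proof.
case=> u [v [w [Mbc Mac Mab uvw]]].
by exists u, w, v; rewrite (Msym c b); split=> //; apply: rc_labels_swap23.
Qed.

Lemma retract_compatible_triangle T a b c :
  retract_compatible M T -> a \in T -> b \in T -> c \in T ->
  a != b -> a != c -> b != c -> rc_triangle a b c.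
Proof.
move=> [_ rc3] aT bT cT ab ac bc.
have [a' [b' [c' [eq_abc [Mab_ac [p [q [Mbc Mab pq]]]]]]]] := rc3 a b c aT bT cT ab ac bc.
apply: (set3_sym_transfer rc_triangle_swap12 rc_triangle_swap23 ab ac bc eq_abc).
by exists p, q, q; rewrite -Mab_ac /rc_labels eqxx pq.
Qed.

End RetractCompatibleTriangles.

Section Retractions.
Variables (S : finType) (M : S -> S -> option nat).
Hypothesis Msym : forall s t, M s t = M t s.

Definition even_or_infinite (n : option nat) : Prop :=
  n = None \/ exists2 k, n = Some k & ~~ odd k.

Definition uniform_off_block (T : {set S}) : Prop :=
  forall y, y \notin T -> exists2 n, even_or_infinite n & forall a, a \in T -> M a y = n.

Lemma parabolic_block x : parabolic_retract_compatible M ->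
  exists T : {set S}, [/\ x \in T, retract_compatible M T & uniform_off_block T].
Proof.
move=> [P [/and3P[/eqP coverP _ _] [rcP offP]]].
have blockP y : pblock P y \in P by apply: pblock_mem; rewrite coverP inE.
have in_block y : y \in pblock P y by rewrite mem_pblock coverP inE.
exists (pblock P x); split=> [||y yNx]; [exact: in_block | exact: rcP |].
have neq_blocks : pblock P x != pblock P y by apply: contraNneq yNx => ->.
have [n [n_even Mn]] := offP _ _ (blockP x) (blockP y) neq_blocks.
by exists n => // a aT; apply: Mn.
Qed.

Lemma delete_retraction x :
  (forall t k, t != x -> M x t = Some k -> ~~ odd k) ->
  ordinary_retraction M [set~ x] (word_subst (fun s => if s == x then None else Some s)).
Proof.
move=> Mx_even; apply: word_subst_ordinary_retraction => //.
- by move=> s /negbTE ->.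
- by rewrite eqxx.
move=> t k tx Mxt; rewrite -[k](odd_double_half k) (negbTE (Mx_even t k tx Mxt)).
by rewrite word_subst_Pi_double ?eqxx //; apply: ae_refl.
Qed.

Lemma fold_retraction x z (T : {set S}) :
  x \in T -> z \in T -> z != x -> retract_compatible M T ->
  uniform_off_block T ->
  (forall t, t \in T -> t != x -> odflt 0 (M x z) <= odflt 0 (M x t)) ->
  ordinary_retraction M [set~ x] (word_subst (fun s => Some (if s == x then z else s))).
Proof.
move=> xT zT zx rcT offT zmin; apply: word_subst_ordinary_retraction => //.
- by move=> s /negbTE ->.
- by rewrite eqxx; apply: contraNneq zx => -[->].
move=> t k tx Mxt.
rewrite (word_subst_Pi _ (s' := z) (t' := t)) ?(word_subst_Pi _ (s' := t) (t' := z));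
  rewrite /= ?eqxx ?(negbTE tx) //.
have [-> | tz] := eqVneq t z; first exact: ae_refl.
have [tT | tNT] := boolP (t \in T); last first.
  have [n _ Mn] := offT t tNT.
  by apply: ae_rel; rewrite 1?eq_sym // Mn // -(Mn x xT).
have [p Mxz odd_p] := rcT.1 x z xT zT.
have [r Mzt odd_r] := rcT.1 z t zT tT.
have [u [v [w [Mzt' Mxt' Mxz' ruvw]]]] : rc_triangle M x z t.
  by apply: (retract_compatible_triangle Msym rcT) => //; rewrite eq_sym.
move: Mzt' Mxt' Mxz' ruvw; rewrite Mzt Mxt Mxz => -[<-] [<-] [<-] rkp.
have le_pk : p <= k by move: (zmin t tT tx); rewrite Mxz Mxt.
have dvd_rk : r %| k := rc_labels_dvd (odd_gt0 odd_p) le_pk rkp.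
by rewrite -(divnK dvd_rk) mulnC; apply: Pi_rel_mul; rewrite 1?eq_sym.
Qed.

End Retractions.

Theorem lemma3p10 (S : finType) (M : S -> S -> option nat) :
  coxeter_matrix M -> parabolic_retract_compatible M ->
  forall x : S, exists phi : word S -> word S,
    ordinary_retraction M [set~ x] phi.
Proof.
move=> [_ [Msym _]] prcM x.
have [T [xT rcT offT]] := parabolic_block x prcM.
case: (pickP [pred z | (z \in T) && (z != x)]) => [z0 z0P | noz].
  have [z /andP[zT zx] zmin] := arg_minnP (fun z => odflt 0 (M x z)) z0P.
  eexists; apply: (fold_retraction Msym xT zT zx rcT offT) => t tT tx.
  by apply: zmin; rewrite /= tT.
eexists; apply: delete_retraction => // t k tx Mxt.
have tNT : t \notin T by move: (noz t); rewrite /= tx andbT => ->.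
have [n [-> | [k' -> even_k']] Mn] := offT t tNT; rewrite Mn // in Mxt.
by case: Mxt => <-.
Qed.
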